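(* Let $A$ be a skew brace and endow $\mathrm{Spec}\,A$ with the spectral topology. Then the irreducible closed subsets of $\mathrm{Spec}\,A$ are precisely the sets $H(P)=\{Q\in\mathrm{Spec}\,A\mid P\subseteq Q\}$ with $P\in\mathrm{Spec}\,A$.
   Context: A (left) skew brace is a triple $(A,+,\circ)$ where $(A,+)$ and $(A,\circ)$ are groups such that $a\circ(b+c)=a\circ b-a+a\circ c$ for all $a,b,c\in A$; the common identity is $e$. Put $\lambda_a(b)=-a+a\circ b$ and $a*b=-a+a\circ b-b$. An ideal of $A$ is a normal subgroup $I$ of both $(A,+)$ and $(A,\circ)$ with $\lambda_a(I)\subseteq I$ for all $a\in A$. For subsets $I,J\subseteq A$, $I*J=\{i*j\mid i\in I,j\in J\}$. A prime ideal is a proper ideal $P$ such that for any subsets $I,J$ of $A$, $I*J\subseteq P$ implies $I\subseteq P$ or $J\subseteq P$; $\mathrm{Spec}\,A$ is the set of prime ideals. For an ideal $I$, $H(I)=\{P\in\mathrm{Spec}\,A\mid I\subseteq P\}$; the spectral topology on $\mathrm{Spec}\,A$ has as closed sets exactly the sets $H(I)$, $I$ an ideal. A closed subset $S$ is irreducible if it is not the union of two closed subsets $S_1,S_2\subsetneq S$. *)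

Set Implicit Arguments.

Record skew_brace := SkewBrace {
  car :> Type;
  add : car -> car -> car;
  opp : car -> car;
  e : car;
  circ : car -> car -> car;
  cinv : car -> car;
  addA : forall a b c, add a (add b c) = add (add a b) c;
  add0l : forall a, add e a = a;
  add0r : forall a, add a e = a;
  addNl : forall a, add (opp a) a = e;
  addNr : forall a, add a (opp a) = e;
  circA : forall a b c, circ a (circ b c) = circ (circ a b) c;
  circ1l : forall a, circ e a = a;
  circ1r : forall a, circ a e = a;
  circVl : forall a, circ (cinv a) a = e;
  circVr : forall a, circ a (cinv a) = e;
  brace_comp : forall a b c,
    circ a (add b c) = add (add (circ a b) (opp a)) (circ a c)
}.

Arguments add {s} _ _.
Arguments opp {s} _.
Arguments circ {s} _ _.
Arguments cinv {s} _.

Section Defs.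
Variable A : skew_brace.

Definition lam (a b : A) : A := add (opp a) (circ a b).
Definition star (a b : A) : A := add (add (opp a) (circ a b)) (opp b).

Definition subset (I J : A -> Prop) : Prop := forall x, I x -> J x.

Definition ideal (I : A -> Prop) : Prop :=
  I (e A) /\ (forall x y, I x -> I y -> I (add x y)) /\
  (forall x, I x -> I (opp x)) /\
  (forall a x, I x -> I (add (add a x) (opp a))) /\
  (forall x y, I x -> I y -> I (circ x y)) /\
  (forall x, I x -> I (cinv x)) /\
  (forall a x, I x -> I (circ (circ a x) (cinv a))) /\
  (forall a x, I x -> I (lam a x)).

Definition star_sub (I J P : A -> Prop) : Prop :=
  forall i j, I i -> J j -> P (star i j).

Definition prime_ideal (P : A -> Prop) : Prop :=
  ideal P /\ (exists a, ~ P a) /\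
  (forall I J : A -> Prop, star_sub I J P -> subset I P \/ subset J P).

Definition H (I : A -> Prop) : (A -> Prop) -> Prop :=
  fun P => prime_ideal P /\ subset I P.

Definition spec_closed (S : (A -> Prop) -> Prop) : Prop :=
  exists I, ideal I /\ forall P, S P <-> H I P.

Definition irreducible_closed (S : (A -> Prop) -> Prop) : Prop :=
  spec_closed S /\ (exists P, S P) /\
  ~ (exists S1 S2 : (A -> Prop) -> Prop,
       spec_closed S1 /\ spec_closed S2 /\
       (forall P, S1 P -> S P) /\ (exists P, S P /\ ~ S1 P) /\
       (forall P, S2 P -> S P) /\ (exists P, S P /\ ~ S2 P) /\
       (forall P, S P <-> (S1 P \/ S2 P))).

End Defs.

Arguments lam {A} _ _.
Arguments star {A} _ _.
Arguments subset {A} _ _.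
Arguments ideal {A} _.
Arguments star_sub {A} _ _ _.
Arguments prime_ideal {A} _.
Arguments H {A} _ _.
Arguments spec_closed {A} _.
Arguments irreducible_closed {A} _.

From Stdlib Require Import Classical.

Set Implicit Arguments.
Unset Strict Implicit.

(* An irreducible closed set S is H of the intersection P of its points: P is
   an ideal, and if I * J ⊆ P then S is covered by the closed sets H I and H J,
   so by irreducibility one of them contains S, i.e. I ⊆ P or J ⊆ P.
   Conversely H P contains its generic point P, and a closed set containing P
   contains every prime above P, so H P is not a union of two proper closed
   subsets. *)

Section Spectrum.

Variable A : skew_brace.

Definition bigcap (F : (A -> Prop) -> Prop) : A -> Prop :=
  fun x => forall T, F T -> T x.

Definition ideal_closure (J : A -> Prop) : A -> Prop :=
  bigcap (fun T => ideal T /\ subset J T).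

Lemma bigcap_ideal (F : (A -> Prop) -> Prop) :
  (forall T, F T -> ideal T) -> ideal (bigcap F).
Proof.
  intros HF.
  repeat split; intros; intros T HT; unfold bigcap in *;
    repeat match goal with Hx : forall T, F T -> T _ |- _ => specialize (Hx T HT) end;
    destruct (HF T HT) as (? & ? & ? & ? & ? & ? & ? & ?); auto.
Qed.

Lemma ideal_closure_ideal (J : A -> Prop) : ideal (ideal_closure J).
Proof. apply bigcap_ideal; intros T [HT _]; exact HT. Qed.

Lemma subset_ideal_closure (J : A -> Prop) : subset J (ideal_closure J).
Proof. intros x Jx T [_ HT]; auto. Qed.

Lemma H_ideal_closure (J : A -> Prop) (Q : A -> Prop) :
  H (ideal_closure J) Q <-> H J Q.
Proof.
  split.
  - intros [HQ HJQ]; split; auto.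
    intros x Jx; apply HJQ, subset_ideal_closure, Jx.
  - intros [HQ HJQ]; split; auto.
    intros x Jx; apply Jx; split; auto; apply HQ.
Qed.

Lemma spec_closed_H (J : A -> Prop) : spec_closed (H J).
Proof.
  exists (ideal_closure J); split.
  - apply ideal_closure_ideal.
  - intros Q; symmetry; apply H_ideal_closure.
Qed.

Lemma spec_closedI (S1 S2 : (A -> Prop) -> Prop) :
  spec_closed S1 -> spec_closed S2 -> spec_closed (fun Q => S1 Q /\ S2 Q).
Proof.
  intros [I1 [_ HS1]] [I2 [_ HS2]].
  destruct (spec_closed_H (fun x => I1 x \/ I2 x)) as [I [HI HS]].
  exists I; split; auto.
  intros Q; rewrite HS1, HS2, <- HS; unfold H, subset; split.
  - intros [[HQ H1] [_ H2]]; split; auto.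
    intros x [Ix | Ix]; auto.
  - intros [HQ H12]; split; split; auto.
Qed.

Lemma spec_closed_prime (S : (A -> Prop) -> Prop) (Q : A -> Prop) :
  spec_closed S -> S Q -> prime_ideal Q.
Proof. intros [I [_ HS]] SQ; apply HS in SQ; apply SQ. Qed.

Lemma spec_closed_up (S : (A -> Prop) -> Prop) (P Q : A -> Prop) :
  spec_closed S -> S P -> prime_ideal Q -> subset P Q -> S Q.
Proof.
  intros [I [_ HS]] SP HQ HPQ.
  apply HS in SP; destruct SP as [_ HIP].
  apply HS; split; auto.
  intros x Ix; apply HPQ, HIP, Ix.
Qed.

Lemma prime_ideal_H (P : A -> Prop) : prime_ideal P -> H P P.
Proof. intros HP; split; auto; intros x Px; exact Px. Qed.

Lemma prime_H_star_sub (I J P Q : A -> Prop) :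
  prime_ideal Q -> star_sub I J P -> subset P Q -> H I Q \/ H J Q.
Proof.
  intros HQ HIJ HPQ; pose proof HQ as [_ [_ HQprime]].
  destruct (HQprime I J) as [HIQ | HJQ].
  - intros i j Ii Jj; apply HPQ, HIJ; assumption.
  - left; split; assumption.
  - right; split; assumption.
Qed.

Lemma spec_closed_H_bigcap (S : (A -> Prop) -> Prop) :
  spec_closed S -> forall Q, S Q <-> H (bigcap S) Q.
Proof.
  intros HSc Q; split.
  - intros SQ; split; [apply (spec_closed_prime HSc SQ) |].
    intros x Sx; apply Sx, SQ.
  - destruct HSc as [I [_ HS]].
    intros [HQ Hsub]; apply HS; split; auto.
    intros x Ix; apply Hsub; intros T ST.
    apply HS in ST; apply ST, Ix.
Qed.

Lemma irreducible_closed_cover (S S1 S2 : (A -> Prop) -> Prop) :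
  irreducible_closed S -> spec_closed S1 -> spec_closed S2 ->
  (forall Q, S Q -> S1 Q \/ S2 Q) ->
  (forall Q, S Q -> S1 Q) \/ (forall Q, S Q -> S2 Q).
Proof.
  intros [HSc [_ Hirr]] HS1 HS2 Hcov.
  apply NNPP; intros Hnot; apply not_or_and in Hnot; destruct Hnot as [N1 N2].
  apply not_all_ex_not in N1; destruct N1 as [Q1 N1].
  apply not_all_ex_not in N2; destruct N2 as [Q2 N2].
  apply imply_to_and in N1; apply imply_to_and in N2.
  apply Hirr.
  exists (fun Q => S Q /\ S1 Q), (fun Q => S Q /\ S2 Q).
  repeat split.
  - apply spec_closedI; assumption.
  - apply spec_closedI; assumption.
  - intros Q [SQ _]; exact SQ.
  - exists Q1; split; [apply N1 | intros [_ ?]; apply N1; assumption].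
  - intros Q [SQ _]; exact SQ.
  - exists Q2; split; [apply N2 | intros [_ ?]; apply N2; assumption].
  - intros SP; destruct (Hcov P SP); auto.
  - intros [[SP _] | [SP _]]; exact SP.
Qed.

Lemma irreducible_bigcap_prime (S : (A -> Prop) -> Prop) :
  irreducible_closed S -> prime_ideal (bigcap S).
Proof.
  intros Hirr; pose proof Hirr as [HSc [[Q0 SQ0] _]].
  split; [| split].
  - apply bigcap_ideal; intros T ST; apply (spec_closed_prime HSc ST).
  - destruct (spec_closed_prime HSc SQ0) as [_ [[a Ha] _]].
    exists a; intros Hc; apply Ha, Hc, SQ0.
  - intros I J HIJ.
    assert (Hcov : forall Q, S Q -> H I Q \/ H J Q).
    { intros Q SQ; apply (prime_H_star_sub (spec_closed_prime HSc SQ) HIJ).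
      intros x Px; apply Px, SQ. }
    destruct (irreducible_closed_cover Hirr (spec_closed_H I) (spec_closed_H J) Hcov)
      as [HI | HJ]; [left | right]; intros x Kx T ST.
    + apply (HI T ST), Kx.
    + apply (HJ T ST), Kx.
Qed.

Lemma H_prime_irreducible (S : (A -> Prop) -> Prop) (P : A -> Prop) :
  prime_ideal P -> (forall Q, S Q <-> H P Q) -> irreducible_closed S.
Proof.
  intros HP HS.
  assert (SP : S P) by (apply HS, prime_ideal_H, HP).
  split; [exists P; split; [apply HP | exact HS] | split; [exists P; exact SP |]].
  intros (S1 & S2 & HS1 & HS2 & _ & [Q1 [SQ1 N1]] & _ & [Q2 [SQ2 N2]] & Hcov).
  assert (Hup : forall S', spec_closed S' -> S' P -> forall Q, S Q -> S' Q).
  { intros S' HS' S'P Q SQ; apply HS in SQ; destruct SQ as [HQ HPQ].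
    apply (spec_closed_up HS' S'P HQ HPQ). }
  apply Hcov in SP; destruct SP as [S1P | S2P].
  - apply N1, (Hup S1 HS1 S1P), SQ1.
  - apply N2, (Hup S2 HS2 S2P), SQ2.
Qed.

End Spectrum.

Theorem lemma4p10 (A : skew_brace) (S : (A -> Prop) -> Prop) :
  irreducible_closed S <->
  exists P : A -> Prop, prime_ideal P /\ (forall Q, S Q <-> H P Q).
Proof.
  split.
  - intros Hirr; exists (bigcap S); split.
    + apply irreducible_bigcap_prime, Hirr.
    + apply spec_closed_H_bigcap, Hirr.
  - intros [P [HP HS]]; apply (H_prime_irreducible HP HS).
Qed.
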